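(* Let $B$, $C$, $\phi$, $\psi$ and the skew brace $A=(B\times C,\cdot,\circ)$ be as in the construction below. Then $A$ is meta-trivial if and only if \[ \psi_{\phi_{c_1}(b_1)b_1^{-1}}\big(\psi_{b_2}(c_2)c_2^{-1}\big) = \psi_{b_2}(c_2)c_2^{-1} \] for all $b_1,b_2\in B$ and $c_1,c_2\in C$.
   Context: Construction: $B$, $C$ are groups with $C$ abelian; $\phi: C\to\mathrm{Aut}(B)$, $c\mapsto\phi_c$, and $\psi: B\to\mathrm{Aut}(C)$, $b\mapsto\psi_b$, are homomorphisms with $\phi_{\psi_b(c)}=\phi_c$ for all $b\in B,c\in C$. The set $A=B\times C$ carries the operations $(b_1,c_1)\cdot(b_2,c_2) = (b_1\phi_{c_1}(b_2), c_1c_2)$ and $(b_1,c_1)\circ(b_2,c_2) = (b_1b_2, c_1\psi_{b_1}(c_2))$, which make it a skew brace (a set with two group operations satisfying $a\circ(b\cdot c)=(a\circ b)\cdot a^{-1}\cdot(a\circ c)$, $a^{-1}$ the inverse in $(A,\cdot)$). Define $a*b = a^{-1}\cdot(a\circ b)\cdot b^{-1}$ and let $A'$ be the subgroup of $(A,\cdot)$ generated by all $a*b$, $a,b\in A$. $A$ is meta-trivial if $A'$ is a trivial skew brace, i.e. $x\circ y = x\cdot y$ for all $x,y\in A'$. *)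

(* groups are (possibly infinite) mathcomp `groupType`s
   from boot/monoid.v. *)
From HB Require Import structures.
From mathcomp Require Import ssreflect ssrfun ssrbool eqtype choice monoid.
Set Implicit Arguments.
Unset Strict Implicit.
Unset Printing Implicit Defensive.
Local Open Scope group_scope.

Definition is_group_aut (G : groupType) (f : G -> G) : Prop :=
  bijective f /\ {morph f : x y / x * y}.

Definition is_aut_action (H G : groupType) (act : H -> G -> G) : Prop :=
  (forall h, is_group_aut (act h)) /\
  (forall h1 h2 x, act (h1 * h2) x = act h1 (act h2 x)).

Definition is_abelian (G : groupType) : Prop := forall x y : G, x * y = y * x.

Section SkewBrace.
Variables (B C : groupType) (phi : C -> B -> B) (psi : B -> C -> C).

Definition sb_dot (x y : B * C) : B * C :=
  (x.1 * phi x.2 y.1, x.2 * y.2).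

Definition sb_circ (x y : B * C) : B * C :=
  (x.1 * y.1, x.2 * psi x.1 y.2).

Definition sb_one : B * C := (1, 1).

Definition sb_inv (x : B * C) : B * C :=
  (phi (x.2)^-1 (x.1)^-1, (x.2)^-1).

Definition sb_star (a b : B * C) : B * C :=
  sb_dot (sb_dot (sb_inv a) (sb_circ a b)) (sb_inv b).

Inductive in_A' : B * C -> Prop :=
  | A'_star a b : in_A' (sb_star a b)
  | A'_one : in_A' sb_one
  | A'_dot x y : in_A' x -> in_A' y -> in_A' (sb_dot x y)
  | A'_inv x : in_A' x -> in_A' (sb_inv x).

(* A is meta-trivial: A' is a trivial skew brace *)
Definition meta_trivial : Prop :=
  forall x y, in_A' x -> in_A' y -> sb_circ x y = sb_dot x y.

End SkewBrace.

From HB Require Import structures.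
From mathcomp Require Import ssreflect ssrfun ssrbool eqtype choice monoid.
Set Implicit Arguments.
Unset Strict Implicit.
Local Open Scope group_scope.

(* Write [c, b]_phi := phi_c(b) b^-1 and call c in C "commutator-fixed" when
   psi_[c1, b1]_phi (c) = c for all b1, c1.  A direct computation gives
     (b1,c1) * (b2,c2) = ([c1^-1, b2]_phi, psi_b1(c2) c2^-1),
   so the condition of the proposition says exactly that the C-components of
   the generators a * b of A' are commutator-fixed.
   - Necessity: comparing the C-components of x o y and x . y for two
     suitable generators x, y of A' yields the condition.
   - Sufficiency: every element (b,c) of A' is "trivializing": phi_c = id,
     c is commutator-fixed, and psi_b fixes every commutator-fixed element.
     This property holds for the generators and is stable under the group
     operations of (A,.); for trivializing x and y the two products agree.
   Commutativity of C is needed for A to be a skew brace, but not for this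
   equivalence. *)

Section AutomorphismAction.
Variables (H G : groupType) (act : H -> G -> G).
Hypothesis hact : is_aut_action act.

Lemma act_mul h1 h2 x : act (h1 * h2) x = act h1 (act h2 x).
Proof. by case: hact. Qed.

Lemma actM h : {morph act h : x y / x * y}.
Proof. by case: hact => ha _; case: (ha h). Qed.

Lemma act1 x : act 1 x = x.
Proof.
case: hact => ha hm; case: (ha 1) => [[g _ gK] _].
by rewrite -[x](gK x) -hm mulg1.
Qed.

Lemma act_one h : act h 1 = 1.
Proof. by apply: (@mulIg _ (act h 1)); rewrite -actM !mulg1 mul1g. Qed.

Lemma act_inv h x : act h x^-1 = (act h x)^-1.
Proof. by apply: (@mulIg _ (act h x)); rewrite -actM !mulVg act_one. Qed.

(* act h and act h^-1 are mutually inverse, so they have the same fixed points. *)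
Lemma act_fix_inv h x : act h x = x -> act h^-1 x = x.
Proof.
move=> fix_x; case: hact => ha _; case: (ha h) => [[g fK _] _].
by apply: (can_inj fK); rewrite -act_mul mulgV act1 fix_x.
Qed.

End AutomorphismAction.

Section MetaTrivial.
Variables (B C : groupType) (phi : C -> B -> B) (psi : B -> C -> C).
Hypothesis hphi : is_aut_action phi.
Hypothesis hpsi : is_aut_action psi.
Hypothesis hcompat : forall (b : B) (c : C) (x : B), phi (psi b c) x = phi c x.

Lemma phiKV (c : C) (x : B) : phi c (phi c^-1 x) = x.
Proof. by rewrite -(act_mul hphi) mulgV (act1 hphi). Qed.

Lemma sb_starE (b1 b2 : B) (c1 c2 : C) :
  sb_star phi psi (b1, c1) (b2, c2) = (phi c1^-1 b2 * b2^-1, psi b1 c2 * c2^-1).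
Proof.
rewrite /sb_star /sb_dot /sb_inv /sb_circ /=.
by rewrite -(actM hphi) mulKg mulKg hcompat phiKV.
Qed.

Definition commutator_fixed (c : C) : Prop :=
  forall (b1 : B) (c1 : C), psi (phi c1 b1 * b1^-1) c = c.

Definition stars_fixed : Prop :=
  forall (b2 : B) (c2 : C), commutator_fixed (psi b2 c2 * c2^-1).

(* The invariant satisfied by every element (b,c) of A' under the condition:
   the first and third fields make x o y = x . y when x is trivializing,
   provided the second field holds for y. *)
Record trivializing (x : B * C) : Prop := {
  phi_trivial : forall z, phi x.2 z = z;
  comp_fixed : commutator_fixed x.2;
  psi_keeps_fixed : forall c, commutator_fixed c -> psi x.1 c = c }.

Lemma trivializing_one : trivializing (@sb_one B C).
Proof.
split=> /= [z|b1 c1|c _]; first exact: (act1 hphi).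
  exact: (act_one hpsi).
exact: (act1 hpsi).
Qed.

Lemma trivializing_star (a1 a2 : B * C) :
  stars_fixed -> trivializing (sb_star phi psi a1 a2).
Proof.
case: a1 a2 => [b1 c1] [b2 c2] hyp; rewrite sb_starE.
split=> /= [z||c hc]; last exact: hc.
  by rewrite (act_mul hphi) hcompat phiKV.
exact: hyp.
Qed.

Lemma trivializing_dot (x y : B * C) :
  trivializing x -> trivializing y -> trivializing (sb_dot phi x y).
Proof.
move=> [x1 x2 x3] [y1 y2 y3]; split=> /= [z|b1 c1|c hc].
- by rewrite (act_mul hphi) y1 x1.
- by rewrite (actM hpsi) x2 y2.
- by rewrite x1 (act_mul hpsi) y3 // x3.
Qed.

Lemma trivializing_inv (x : B * C) :
  trivializing x -> trivializing (sb_inv phi x).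
Proof.
move=> [x1 x2 x3]; split=> /= [z|b1 c1|c hc].
- exact: (act_fix_inv hphi).
- by rewrite (act_inv hpsi) x2.
- by rewrite (act_fix_inv hphi) //; apply: (act_fix_inv hpsi); apply: x3.
Qed.

Lemma A'_trivializing (x : B * C) :
  stars_fixed -> in_A' phi psi x -> trivializing x.
Proof.
move=> hyp; elim=> {x}.
- by move=> a1 a2; apply: trivializing_star.
- exact: trivializing_one.
- by move=> x y _ tx _ ty; apply: trivializing_dot.
- by move=> x _ tx; apply: trivializing_inv.
Qed.

Lemma trivializing_circ_dot (x y : B * C) :
  trivializing x -> trivializing y -> sb_circ psi x y = sb_dot phi x y.
Proof.
by move=> [x1 _ x3] [_ y2 _]; rewrite /sb_circ /sb_dot x1 x3.
Qed.

(* Necessity: compare the C-components of x o y and x . y for the generators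
   x = (b2,c1^-1) * (b1,c2) and y = (b2,c1) * (b2,c2) of A'. *)
Lemma meta_trivial_stars_fixed : meta_trivial phi psi -> stars_fixed.
Proof.
move=> mt b2 c2 b1 c1.
have := mt _ _ (A'_star phi psi (b2, c1^-1) (b1, c2))
               (A'_star phi psi (b2, c1) (b2, c2)).
by rewrite !sb_starE /sb_circ /sb_dot /= invgK => -[_] /mulgI.
Qed.

End MetaTrivial.

Theorem proposition8p4 (B C : groupType) (phi : C -> B -> B) (psi : B -> C -> C)
  (hC : is_abelian C)
  (hphi : is_aut_action phi)
  (hpsi : is_aut_action psi)
  (hcompat : forall (b : B) (c : C) (x : B), phi (psi b c) x = phi c x) :
  meta_trivial phi psi <->
  (forall (b1 b2 : B) (c1 c2 : C),
     psi (phi c1 b1 * b1^-1) (psi b2 c2 * c2^-1) = psi b2 c2 * c2^-1).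
Proof.
split=> [mt b1 b2 c1 c2 | hyp x y Ax Ay].
  exact: (meta_trivial_stars_fixed hphi hcompat mt).
have stars : stars_fixed phi psi by move=> b2 c2 b1 c1; apply: hyp.
by apply: trivializing_circ_dot; apply: (A'_trivializing hphi hpsi hcompat stars).
Qed.
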